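(* Let $\mathcal{M}$ be a circular orientable embedding of a connected graph $X$ with $n$ vertices, $\ell$ edges and $s$ faces, and let $U$ be its vertex-face transition matrix. If either $X$ or its dual graph is regular, then \[\operatorname{tr}(U)=2\left(\frac{ns}{\ell}-(n+s-\ell)\right).\]
   Context: Setting. A circular embedding is a cellular embedding in which every face is bounded by a cycle. Arcs are ordered pairs $(u,v)$ with $\{u,v\}$ an edge, and $u$ is the tail. Vertex-face transition matrix. Fix a consistent orientation of the faces: for each edge shared by two faces, the two faces give it opposite directions. Then every arc lies in exactly one facial walk. Let $M$ be the arc-face incidence matrix and $N$ the arc-tail incidence matrix ($N_{(a,b),u}=1$ iff $a=u$). Let $\widehat M,\widehat N$ be these matrices with columns scaled to unit length. The vertex-face transition matrix is $U=(2\widehat M\widehat M^T-I)(2\widehat N\widehat N^T-I)$. The dual graph has the faces as vertices, with two faces adjacent for each edge they share. *)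

(* Orientable cellular embeddings of a connected simple graph
   are encoded by rotation systems (Heffter--Edmonds). *)
From HB Require Import structures.
From mathcomp Require Import all_boot all_order all_algebra all_fingroup.
Set Implicit Arguments. Unset Strict Implicit. Unset Printing Implicit Defensive.
Import Order.TTheory GRing.Theory Num.Theory.
Local Open Scope ring_scope.

Definition Arc (V : finType) (adj : rel V) := {p : V * V | adj p.1 p.2}.
HB.instance Definition _ (V : finType) (adj : rel V) :=
  Finite.copy (Arc adj) {p : V * V | adj p.1 p.2}.

Section Embedding.
Variables (V : finType) (adj : rel V).
Local Notation Arc := (Arc adj).
Definition arc_tail (a : Arc) : V := (val a).1.
Definition arc_head (a : Arc) : V := (val a).2.

Definition edges : {set {set V}} :=
  [set [set p.1; p.2] | p in [set p : V * V | adj p.1 p.2]].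

Definition connected_graph : Prop := forall u v : V, connect adj u v.

Definition regular_graph : Prop :=
  exists k : nat, forall v : V, #|[set u | adj v u]| = k.

Variable (adj_sym : symmetric adj).

Definition rev_arc (a : Arc) : Arc :=
  @exist _ (fun p : V * V => adj p.1 p.2) ((val a).2, (val a).1)
    (eq_ind _ is_true (valP a) _ (adj_sym (val a).1 (val a).2)).

Definition rotation_system (rho : {perm Arc}) : Prop :=
  (forall a, arc_tail (rho a) = arc_tail a) /\
  (forall a b, arc_tail a = arc_tail b -> fconnect rho a b).

Variable rho : {perm Arc}.

(* facial successor: after traversing (u,v) we continue with the next Arc at v *)
Definition face_step (a : Arc) : Arc := rho (rev_arc a).

Definition face_of (a : Arc) : {set Arc} := [set b | fconnect face_step a b].
Definition faces : {set {set Arc}} := [set face_of a | a : Arc].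

(* circular: every facial walk is a cycle (distinct vertices, length >= 3) *)
Definition circular : Prop :=
  forall a : Arc, uniq [seq arc_tail b | b <- fingraph.orbit face_step a] /\
                  (3 <= size (fingraph.orbit face_step a))%N.

(* degree of a face f in the dual graph: each edge {a, rev a} contributes
   [face a = f] + [face (rev a) = f], i.e. the number of arcs on f *)
Definition dual_deg (f : {set Arc}) : nat := #|[set a | face_of a == f]|.
Definition dual_regular : Prop :=
  exists k : nat, forall f, f \in faces -> dual_deg f = k.

Variable R : rcfType.
Local Notation nA := #|{: Arc}|.
Local Notation nF := #|faces|.
Local Notation nV := #|V|.

Definition inc_M : 'M[R]_(nA, nF) :=
  \matrix_(i, j) (if enum_val i \in (enum_val j : {set Arc}) then 1 else 0).
Definition inc_N : 'M[R]_(nA, nV) :=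
  \matrix_(i, j) (if arc_tail (enum_val i) == enum_val j then 1 else 0).

End Embedding.

Definition col_normalize (R : rcfType) m n (A : 'M[R]_(m, n)) : 'M[R]_(m, n) :=
  \matrix_(i, j) (A i j / Num.sqrt (\sum_(k < m) A k j ^+ 2)).

Definition vf_transition (V : finType) (adj : rel V) (adj_sym : symmetric adj)
    (rho : {perm Arc adj}) (R : rcfType) : 'M[R]_(#|{: Arc adj}|) :=
  let Mh := col_normalize (inc_M adj_sym rho R) in
  let Nh := col_normalize (inc_N adj R) in
  (2%:R *: (Mh *m Mh^T) - 1%:M) *m (2%:R *: (Nh *m Nh^T) - 1%:M).

From mathcomp Require Import all_boot all_order all_algebra all_fingroup.
From mathcomp Require Import ring.
Import GRing.Theory Num.Theory.
Set Implicit Arguments.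
Unset Strict Implicit.
Unset Printing Implicit Defensive.

Local Open Scope ring_scope.

(* Write P_F = M^ M^T and P_V = N^ N^T.  Every arc lies on exactly one face and
   has exactly one tail, so each is the Gram matrix of a column-normalised
   indicator matrix of a map f on arcs, i.e. the averaging projection
   (P_f)_ab = [f a = f b] / |f^-1(f a)|.  Thus tr P_F = s, tr P_V = n, and
   tr U = 4 tr (P_F P_V) - 2 s - 2 n + 2 l.  Circularity makes an arc
   determined by its face and its tail, so tr (P_F P_V) is the sum over arcs of
   1 / (|face a| deg (tail a)).  If one of these fibre sizes is a constant d,
   the sum is (number of classes of the other map) / d, and the constant-fibre
   map has 2 l / d classes; either way tr (P_F P_V) = n s / (2 l). *)

Lemma uniq_map_inj_in (T1 T2 : eqType) (f : T1 -> T2) (s : seq T1) :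
  uniq (map f s) -> {in s &, injective f}.
Proof.
elim: s => [//|z s IHs] /= /andP[fz_s /IHs inj_s] x y.
rewrite !inE => /predU1P[-> | xs] /predU1P[-> | ys] // fxy.
- by move: fz_s; rewrite fxy map_f.
- by move: fz_s; rewrite -fxy map_f.
- exact: inj_s.
Qed.

Definition fiber (T T' : finType) (f : T -> T') (x : T) : {set T} :=
  [set y | f y == f x].

Lemma fiber_self (T T' : finType) (f : T -> T') x : x \in fiber f x.
Proof. by rewrite inE. Qed.

Lemma card_constant_fibers (T T' : finType) (f : T -> T') k :
  (forall x, #|fiber f x| = k) -> #|T| = (#|f @: T| * k)%N.
Proof.
move=> fk; rewrite -[LHS]sum1_card (partition_big_imset f) /= -sum_nat_const.
apply: eq_bigr => _ /imsetP[x _ ->]; rewrite -(fk x) -sum1_card.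
by apply: eq_bigl => y; rewrite inE.
Qed.

Lemma sum_inv_card_fiber (R : numFieldType) (T T' : finType) (f : T -> T') :
  \sum_x (#|fiber f x|%:R : R)^-1 = #|f @: T|%:R.
Proof.
rewrite (partition_big_imset f) /= -sumr_const; apply: eq_bigr => _ /imsetP[x _ ->].
rewrite (eq_bigr (fun=> (#|fiber f x|%:R)^-1)) => [|y /eqP fy]; last first.
  by rewrite /fiber fy.
rewrite (eq_bigl (mem (fiber f x))) => [|y]; last by rewrite !inE.
rewrite sumr_const -[X in X *+ _]mulr1 -mulrnAr mulVf // pnatr_eq0 -lt0n.
by apply/card_gt0P; exists x; apply: fiber_self.
Qed.

Lemma mxtrace_mul_reflections (R : comRingType) n (P Q : 'M[R]_n) :
  \tr ((2%:R *: P - 1%:M) *m (2%:R *: Q - 1%:M)) =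
  4%:R * \tr (P *m Q) - 2%:R * \tr P - 2%:R * \tr Q + n%:R.
Proof.
rewrite mulmxBl !mulmxBr !mul1mx !mulmx1 -scalemxAl -scalemxAr scalerA.
rewrite !mxtraceD !raddfN /= !mxtraceD !raddfN /= !mxtraceZ mxtrace1 -natrM; ring.
Qed.

Lemma col_normalize_gramE (R : rcfType) m n (A : 'M[R]_(m, n)) i j :
  (col_normalize A *m (col_normalize A)^T) i j =
  \sum_k A i k * A j k / \sum_(l < m) A l k ^+ 2.
Proof.
rewrite !mxE; apply: eq_bigr => k _; rewrite !mxE mulrACA -invfM -expr2 sqr_sqrtr //.
by apply: sumr_ge0 => l _; apply: sqr_ge0.
Qed.

Lemma sum_enum_val (R : nmodType) (T : finType) (F : T -> R) :
  \sum_(i < #|T|) F (enum_val i) = \sum_x F x.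
Proof. by rewrite -big_enum_val. Qed.

Section FiberProjection.
Variables (R : numFieldType) (T : finType).

Definition fiber_proj (C : finType) (f : T -> C) : 'M[R]_#|T| :=
  \matrix_(i, j) ((f (enum_val i) == f (enum_val j))%:R / #|fiber f (enum_val i)|%:R).

Lemma mxtrace_fiber_proj (C : finType) (f : T -> C) :
  \tr (fiber_proj f) = #|f @: T|%:R.
Proof.
rewrite -sum_inv_card_fiber -(sum_enum_val (fun x => #|fiber f x|%:R^-1)).
by apply: eq_bigr => i _; rewrite mxE eqxx mul1r.
Qed.

Lemma mxtrace_fiber_proj_mul (C C' : finType) (f : T -> C) (g : T -> C') :
  injective (fun x => (f x, g x)) ->
  \tr (fiber_proj f *m fiber_proj g) = \sum_x (#|fiber f x| * #|fiber g x|)%:R^-1.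
Proof.
move=> fg_inj; rewrite -(sum_enum_val (fun x => (#|fiber f x| * #|fiber g x|)%:R^-1)).
apply: eq_bigr => i _; rewrite mxE (bigD1 i) //= big1 ?addr0 => [|j ne_ji].
  by rewrite !mxE !eqxx !mul1r natrM invfM.
rewrite !mxE; have [fij|] := eqVneq (f (enum_val i)) (f (enum_val j)); last first.
  by rewrite !mul0r.
have [gji|] := eqVneq (g (enum_val j)) (g (enum_val i)); last by rewrite mul0r mulr0.
by case/eqP: ne_ji; apply/enum_val_inj/fg_inj; rewrite fij gji.
Qed.

Lemma mxtrace_fiber_proj_mul_const (C C' : finType) (f : T -> C) (g : T -> C')
    (x0 : T) d :
  injective (fun x => (f x, g x)) -> (forall x, #|fiber f x| = d) ->
  \tr (fiber_proj f *m fiber_proj g) = (#|f @: T| * #|g @: T|)%:R / #|T|%:R.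
Proof.
move=> fg_inj fd; rewrite mxtrace_fiber_proj_mul // (card_constant_fibers fd).
under eq_bigr do rewrite fd natrM invfM.
rewrite -mulr_sumr sum_inv_card_fiber !natrM.
have d_gt0 : (0 < d)%N.
  by rewrite -(fd x0); apply/card_gt0P; exists x0; apply: fiber_self.
have im_gt0 : (0 < #|f @: T|)%N by apply/card_gt0P; exists (f x0); apply: imset_f.
by field; rewrite !pnatr_eq0 -!lt0n d_gt0 im_gt0.
Qed.

Lemma mxtrace_fiber_proj_mul_regular (C C' : finType) (f : T -> C) (g : T -> C')
    (x0 : T) :
  injective (fun x => (f x, g x)) ->
  (exists d, forall x, #|fiber f x| = d) \/ (exists d, forall x, #|fiber g x| = d) ->
  \tr (fiber_proj f *m fiber_proj g) = (#|f @: T| * #|g @: T|)%:R / #|T|%:R.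
Proof.
move=> fg_inj [[d fd] | [d gd]]; first exact: mxtrace_fiber_proj_mul_const fd.
rewrite mxtrace_mulC mulnC (mxtrace_fiber_proj_mul_const x0 _ gd) // => x y [gxy fxy].
by apply: fg_inj; rewrite fxy gxy.
Qed.

End FiberProjection.

Section FiberIncidence.
Variables (R : rcfType) (T : finType).

Definition fiber_incidence (C : finType) (D : {pred C}) (f : T -> C)
    : 'M[R]_(#|T|, #|D|) :=
  \matrix_(i, k) (if f (enum_val i) == enum_val k then 1 else 0).

Lemma fiber_incidence_col_norm (C : finType) (D : {pred C}) (f : T -> C) k :
  \sum_(l < #|T|) fiber_incidence D f l k ^+ 2 = #|[set x | f x == enum_val k]|%:R.
Proof.
under eq_bigr do rewrite mxE.
rewrite (sum_enum_val (fun x => (if f x == enum_val k then 1 else 0) ^+ 2)).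
rewrite (eq_bigr (fun x => if f x == enum_val k then 1 else 0)).
  by rewrite -big_mkcond sumr_const; congr _%:R; apply: eq_card => x; rewrite inE.
by move=> x _; case: eqP; rewrite ?expr1n ?expr0n.
Qed.

Lemma fiber_incidence_gram (C : finType) (D : {pred C}) (f : T -> C) :
  (forall x, f x \in D) ->
  col_normalize (fiber_incidence D f) *m (col_normalize (fiber_incidence D f))^T
    = fiber_proj R f.
Proof.
move=> fD; apply/matrixP => i j; rewrite col_normalize_gramE mxE.
under eq_bigr do rewrite fiber_incidence_col_norm !mxE.
rewrite -(big_enum_val (fun c => (if f (enum_val i) == c then 1 else 0) *
  (if f (enum_val j) == c then 1 else 0) / #|[set x | f x == c]|%:R)) /=.
rewrite (bigD1 (f (enum_val i))) //= big1 ?addr0 => [|c /andP[_ ne_c]]; last first.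
  by rewrite eq_sym (negPf ne_c) !mul0r.
by rewrite eqxx mul1r eq_sym; case: eqP.
Qed.

End FiberIncidence.

Lemma set2_pair_eq (T : finType) (p q : T * T) : q.1 != q.2 ->
  ([set p.1; p.2] == [set q.1; q.2]) = (p == q) || (p == (q.2, q.1)).
Proof.
case: p q => [x y] [u w] /= neq_uw; apply/eqP/idP => [E | /orP[] /eqP[-> ->] //].
  move: (set21 u w) (set22 u w) neq_uw; rewrite -E !inE.
  by case/orP => /eqP-> /orP[] /eqP->; rewrite ?eqxx ?orbT.
by apply/setP => z; rewrite !inE orbC.
Qed.

Section RotationSystem.
Variables (V : finType) (adj : rel V) (adj_sym : symmetric adj) (rho : {perm Arc adj}).
Local Notation Arc := (Arc adj).
Local Notation rev_arc := (rev_arc adj_sym).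
Local Notation face_step := (face_step adj_sym rho).
Local Notation face_of := (face_of adj_sym rho).
Local Notation faces := (faces adj_sym rho).

Lemma rev_arcK : involutive rev_arc.
Proof. by move=> a; apply: val_inj; case: a => [[]]. Qed.

Lemma face_step_inj : injective face_step.
Proof. by move=> a b /perm_inj/(can_inj rev_arcK). Qed.

Lemma mem_face_of a b : (b \in face_of a) = (face_of a == face_of b).
Proof.
apply/idP/eqP => [ab | ->]; last by rewrite inE connect0.
apply/setP => c; rewrite inE in ab; rewrite !inE.
exact: (same_connect (fconnect_sym face_step_inj) ab).
Qed.

Lemma inc_M_fiber (R : rcfType) : inc_M adj_sym rho R = fiber_incidence R faces face_of.
Proof.
apply/matrixP => i k; rewrite !mxE.
have /imsetP[a _ ->] := enum_valP k.
by rewrite mem_face_of eq_sym.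
Qed.

Lemma circular_face_tail_inj :
  circular adj_sym rho -> injective (fun a => (face_of a, arc_tail a)).
Proof.
move=> circ a b [fab tab]; have [tails_uniq _] := circ a.
have b_orbit : b \in fingraph.orbit face_step a.
  by rewrite -fconnect_orbit -[fconnect _ _ _]inE mem_face_of fab.
by apply: (uniq_map_inj_in tails_uniq) => //; rewrite -fconnect_orbit connect0.
Qed.

Lemma dual_regular_card_fiber_face_of :
  dual_regular adj_sym rho -> exists d, forall a, #|fiber face_of a| = d.
Proof. by case=> d dual_reg; exists d => a; apply/dual_reg/imset_f. Qed.

End RotationSystem.

Section ArcsOfGraph.
Variables (V : finType) (adj : rel V).
Local Notation Arc := (Arc adj).
Local Notation arc_tail := (@arc_tail V adj).
Local Notation arc_head := (@arc_head V adj).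

Lemma arc_tail_surj :
  connected_graph adj -> (exists u v, adj u v) ->
  forall v, exists a : Arc, arc_tail a = v.
Proof.
move=> conn [x [y xy]] v; have [-> | neq_vx] := eqVneq v x.
  by exists (exist _ (x, y) xy).
have /connectP[[|z p] /= vp vx] := conn v x; first by rewrite vx eqxx in neq_vx.
by case/andP: vp => vz _; exists (exist _ (v, z) vz).
Qed.

Lemma card_arc_tails :
  connected_graph adj -> (exists u v, adj u v) -> #|[set arc_tail a | a : Arc]| = #|V|.
Proof.
move=> conn has_edge; rewrite -cardsT; apply: eq_card => v; rewrite in_setT.
by have [a <-] := arc_tail_surj conn has_edge v; apply: imset_f.
Qed.

Lemma card_fiber_arc_tail (a : Arc) :
  #|fiber arc_tail a| = #|[set u | adj (arc_tail a) u]|.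
Proof.
have head_inj : {in fiber arc_tail a &, injective arc_head}.
  move=> [[x y] ?] [[u w] ?]; rewrite !inE /arc_tail /arc_head /= => /eqP ex /eqP eu yw.
  by apply: val_inj; rewrite /= ex eu yw.
rewrite -(card_in_imset head_inj); apply: eq_card => u; rewrite inE.
apply/imsetP/idP => [[b] | au]; first by rewrite inE => /eqP<- ->; apply: (valP b).
by exists (exist _ (arc_tail a, u) au); rewrite ?inE.
Qed.

Lemma inc_N_fiber (R : rcfType) : inc_N adj R = fiber_incidence R V arc_tail.
Proof. by []. Qed.

Lemma regular_card_fiber_arc_tail :
  regular_graph adj -> exists d, forall a : Arc, #|fiber arc_tail a| = d.
Proof. by case=> d reg; exists d => a; rewrite card_fiber_arc_tail reg. Qed.

Definition arc_edge (a : Arc) : {set V} := [set arc_tail a; arc_head a].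

Lemma imset_arc_edge : [set arc_edge a | a : Arc] = edges adj.
Proof.
apply/setP => e; apply/imsetP/imsetP => [[a _ ->] | [p]].
  by exists (val a); rewrite ?inE ?(valP a).
by rewrite inE => ap ->; exists (exist _ p ap).
Qed.

Variables (adj_sym : symmetric adj) (adj_irr : irreflexive adj).

Lemma arc_tail_neq_head (a : Arc) : arc_tail a != arc_head a.
Proof.
case: a => [[x y] /= xy]; rewrite /arc_tail /arc_head /=.
by apply: contraTneq xy => ->; rewrite adj_irr.
Qed.

Lemma fiber_arc_edge (a : Arc) : fiber arc_edge a = [set a; rev_arc adj_sym a].
Proof.
by apply/setP => b; rewrite !inE /arc_edge set2_pair_eq ?arc_tail_neq_head // -!val_eqE.
Qed.

Lemma card_arc : #|{: Arc}| = (#|edges adj| * 2)%N.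
Proof.
rewrite -imset_arc_edge; apply: card_constant_fibers => a.
rewrite fiber_arc_edge cards2 -val_eqE /= {1}[sval a]surjective_pairing xpair_eqE.
by rewrite (negPf (arc_tail_neq_head a)).
Qed.

End ArcsOfGraph.

Theorem lemma2p3 (V : finType) (adj : rel V)
  (adj_sym : symmetric adj) (adj_irr : irreflexive adj)
  (rho : {perm Arc adj}) (R : rcfType) :
  connected_graph adj ->
  (exists u v, adj u v) ->
  rotation_system rho ->
  circular adj_sym rho ->
  (regular_graph adj \/ dual_regular adj_sym rho) ->
  let n := #|V| in
  let l := #|edges adj| in
  let s := #|faces adj_sym rho| in
  \tr (vf_transition adj_sym rho R) =
    2%:R * ((n * s)%:R / l%:R - (n%:R + s%:R - l%:R)).
Proof.
move=> conn has_edge _ circ reg n l s.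
have [x [y xy]] := has_edge; pose a0 : Arc adj := exist _ (x, y) xy.
rewrite /vf_transition mxtrace_mul_reflections inc_M_fiber inc_N_fiber.
rewrite !fiber_incidence_gram // => [|a]; last exact: imset_f.
have face_tail_inj := circular_face_tail_inj circ.
rewrite !mxtrace_fiber_proj (mxtrace_fiber_proj_mul_regular R a0 face_tail_inj); last first.
  case: reg => [/regular_card_fiber_arc_tail | /dual_regular_card_fiber_face_of].
  - by right.
  - by left.
rewrite card_arc_tails // (card_arc adj_sym adj_irr) !natrM.
have l_gt0 : (0 < l)%N.
  have : (0 < #|{: Arc adj}|)%N by apply/card_gt0P; exists a0.
  by rewrite (card_arc adj_sym adj_irr) muln_gt0 => /andP[].
by field; rewrite pnatr_eq0 -lt0n l_gt0.
Qed.
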